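(* Let $d\ge2$ and let $\eta$ be a distribution on the nonnegative integers with finite mean, and consider the frog model on $\mathbb{T}_d$ with sleeping-frog distribution $\eta$. For $n\ge0$ let $F_n$ be the set of frogs awake at time $n$, and for a frog $f$ let $|f|$ be its distance from the root at time $n$. Set $\theta=\tfrac12\log\big((\mathbf{E}\eta+1)d\big)$, $m=\frac{2\sqrt{(\mathbf{E}\eta+1)d}}{d+1}$ and \[ W_n=\sum_{f\in F_n}e^{-\theta|f|}. \] Then for every $n\ge0$, $\mathbf{E}[W_{n+1}\mid\mathcal{F}_n]\le mW_n$, where $\mathcal{F}_n$ is the $\sigma$-field generated by the process up to time $n$. Consequently $W_n/m^n$ is a nonnegative supermartingale.
   Context: Let $d\ge 2$ and let $\mathbb{T}_d$ be the infinite rooted $d$-ary tree: every vertex has exactly $d$ children, so the root $\varnothing$ has degree $d$ and every other vertex has degree $d+1$. The frog model on $\mathbb{T}_d$ with sleeping-frog distribution $\eta$ (a law on the nonnegative integers) is defined as follows. Initially there is one awake frog at the root, and at each non-root vertex there is an independent $\eta$-distributed number of sleeping frogs. Time is discrete; at each step every awake frog takes one step of its own independent simple random walk (moves to a uniformly random neighbor). When a vertex holding sleeping frogs is visited for the first time by an awake frog, all frogs sleeping there wake up and from then on perform their own independent simple random walks (frogs woken at time $n+1$ belong to $F_{n+1}$). *)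

From HB Require Import structures.
From mathcomp Require Import all_boot all_order all_algebra.
From mathcomp Require Import all_classical all_reals all_analysis.
Set Implicit Arguments. Unset Strict Implicit. Unset Printing Implicit Defensive.
Import Order.TTheory GRing.Theory Num.Theory.
Local Open Scope ring_scope.

(* Vertices of the rooted d-ary tree T_d: a vertex is the list of child
   indices (each < d) read from the vertex back to the root; the root is [::],
   the i-th child of v is i :: v, the parent of i :: v is v.
   The distance to the root is the size of the list. *)
Definition vertex := seq nat.

Definition nbrs (d : nat) (v : vertex) : seq vertex :=
  match v with
  | [::] => [seq [:: i] | i <- iota 0 d]
  | _ :: w => w :: [seq i :: v | i <- iota 0 d]
  end.

(* A state of the frog model: the positions of the awake frogs (one list entry
   per awake frog) and the set of already visited vertices.  The sleeping frogs
   at unvisited vertices are i.i.d. eta and independent of everything observed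
   so far, so this is the full (Markov) state of the process. *)
Definition state := (seq vertex * seq vertex)%type.

Definition init_state : state := ([:: [::]], [:: [::]]).

Section Kernel.
Variable R : realType.
Local Open Scope ereal_scope.

(* every awake frog takes an independent uniform step to a neighbour *)
Fixpoint moveE (d : nat) (ps : seq vertex) (g : seq vertex -> \bar R) : \bar R :=
  match ps with
  | [::] => g [::]
  | p :: ps' =>
      ((size (nbrs d p))%:R^-1)%:E *
      \big[+%E/0%E]_(q <- nbrs d p) moveE d ps' (fun qs => g (q :: qs))
  end.

(* each newly visited vertex v releases an independent eta-distributed number
   of frogs, which are awake at v *)
Fixpoint wakeE (eta : nat -> R) (vs : seq vertex) (acc : seq vertex)
    (g : seq vertex -> \bar R) : \bar R :=
  match vs with
  | [::] => g acc
  | v :: vs' => \sum_(k <oo) ((eta k)%:E * wakeE eta vs' (acc ++ nseq k v) g)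
  end.

(* One-step transition kernel, as an expectation operator on nonnegative
   functions of the next state. *)
Definition stepE (d : nat) (eta : nat -> R) (g : state -> \bar R) (s : state)
    : \bar R :=
  moveE d s.1 (fun qs =>
    let newv := undup [seq q <- qs | q \notin s.2] in
    wakeE eta newv [::] (fun woken => g (qs ++ woken, s.2 ++ newv))).

Fixpoint lawE (n : nat) (d : nat) (eta : nat -> R) (g : state -> \bar R)
    : \bar R :=
  match n with
  | 0 => g init_state
  | n'.+1 => lawE n' d eta (stepE d eta g)
  end.

(* states having positive probability at time n *)
Fixpoint reachable (n : nat) (d : nat) (eta : nat -> R) (s : state) : Prop :=
  match n with
  | 0 => s = init_state
  | n'.+1 => exists s0, reachable n' d eta s0 /\
        0 < stepE d eta (fun s' => if s' == s then 1 else 0) s0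
  end.

Definition is_pmf (eta : nat -> R) : Prop :=
  (forall k, (0 <= eta k)%R) /\ \sum_(k <oo) (eta k)%:E = 1.

Definition mean (eta : nat -> R) : \bar R := \sum_(k <oo) ((k%:R * eta k)%R)%:E.

End Kernel.

Definition Wfun (R : realType) (theta : R) (s : state) : R :=
  \sum_(f <- s.1) expR (- theta * (size f)%:R).

From HB Require Import structures.
From mathcomp Require Import all_boot all_order all_algebra.
From mathcomp Require Import all_classical all_reals all_analysis.
From mathcomp Require Import ring lra.
Import Order.TTheory GRing.Theory Num.Theory.
Local Open Scope ring_scope.

(* Write r := e^theta, so that r^2 = (E eta + 1) d and a frog at depth k
   contributes r^-k to W.  In one step a frog at p contributes through its own
   new position and, when that position is an unvisited vertex, through the
   frogs woken there, of which there are E eta in expectation.  The visited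
   vertices form a subtree containing every awake frog, so the parent of p is
   visited and only the d children of p can be new; the expected contribution
   is thus at most (r^-(k-1) + d (E eta + 1) r^-(k+1)) / (d + 1) = m r^-k for
   k >= 1, and (E eta + 1) / r = r / d <= m at the root. *)

Lemma size_nbrs d p : size (nbrs d p) = if p is [::] then d else d.+1.
Proof. by case: p => [|x v] /=; rewrite size_map size_iota. Qed.

Lemma sumr_undup_le (R : numDomainType) (T : eqType) (s : seq T) (F : T -> R) :
  (forall x, 0 <= F x) -> \sum_(x <- undup s) F x <= \sum_(x <- s) F x.
Proof.
move=> F0; elim: s => [|x s IH] //=; case: ifP => _; rewrite big_cons.
  by rewrite (le_trans IH) // lerDr.
by rewrite big_cons lerD2l.
Qed.

Lemma Wfun_ge0 (R : realType) (theta : R) s : 0 <= Wfun theta s.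
Proof. by apply: sumr_ge0 => f _; apply: expR_ge0. Qed.

Section Kernel.
Variables (R : realType) (d : nat) (eta : nat -> R).
Hypothesis eta_ge0 : forall k, (0 <= eta k)%R.
Local Open Scope ereal_scope.

Lemma moveE_ge0 ps (g : seq vertex -> \bar R) :
  (forall qs, 0 <= g qs) -> 0 <= moveE d ps g.
Proof.
elim: ps g => [|p ps IH] g g0 /=; first exact: g0.
apply: mule_ge0; first by rewrite lee_fin invr_ge0.
by apply: sume_ge0 => q _; apply: IH.
Qed.

Lemma le_moveE ps (g g' : seq vertex -> \bar R) :
  (forall qs, (forall q, q \in qs -> exists2 p, p \in ps & q \in nbrs d p) ->
     g qs <= g' qs) ->
  moveE d ps g <= moveE d ps g'.
Proof.
elim: ps g g' => [|p ps IH] g g' le_g /=; first exact: le_g.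
apply: lee_wpmul2l; first by rewrite lee_fin invr_ge0.
rewrite big_seq_cond [leRHS]big_seq_cond; apply: lee_sum => q /andP[qp _].
apply: IH => qs qsP; apply: le_g => x.
rewrite inE => /orP[/eqP->|/qsP[p' p'ps xp']].
  by exists p; rewrite ?mem_head.
by exists p'; rewrite // inE p'ps orbT.
Qed.

Lemma moveEZ ps (g : seq vertex -> \bar R) (c : R) : (0 <= c)%R ->
  (forall qs, 0 <= g qs) ->
  moveE d ps (fun qs => c%:E * g qs) = c%:E * moveE d ps g.
Proof.
elim: ps g => [|p ps IH] g c0 g0 //=.
under eq_bigr do rewrite IH //.
by rewrite -ge0_sume_distrr => [|q _]; [rewrite muleCA|apply: moveE_ge0].
Qed.

Lemma wakeE_ge0 vs acc (g : seq vertex -> \bar R) :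
  (forall ws, 0 <= g ws) -> 0 <= wakeE eta vs acc g.
Proof.
elim: vs acc => [|v vs IH] acc g0 /=; first exact: g0.
by apply: nneseries_ge0 => k _ _; rewrite mule_ge0 ?lee_fin ?IH.
Qed.

Lemma le_wakeE vs acc (g g' : seq vertex -> \bar R) :
  (forall ws, 0 <= g ws) ->
  (forall ws, {subset ws <= vs} -> g (acc ++ ws) <= g' (acc ++ ws)) ->
  wakeE eta vs acc g <= wakeE eta vs acc g'.
Proof.
elim: vs acc => [|v vs IH] acc g0 le_g /=.
  by have := le_g [::] (fun x (x0 : x \in [::]) => x0); rewrite cats0.
apply: lee_nneseries => [k _ _|k _].
  by rewrite mule_ge0 ?lee_fin ?wakeE_ge0.
apply: lee_wpmul2l; first by rewrite lee_fin.
apply: IH => // ws ws_vs; rewrite -catA; apply: le_g => x.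
rewrite mem_cat inE => /orP[/nseqP[-> _]|/ws_vs ->]; first by rewrite eqxx.
by rewrite orbT.
Qed.

Lemma wakeEZ vs acc (g : seq vertex -> \bar R) (c : R) : (0 <= c)%R ->
  (forall ws, 0 <= g ws) ->
  wakeE eta vs acc (fun ws => c%:E * g ws) = c%:E * wakeE eta vs acc g.
Proof.
move=> c0; elim: vs acc => [|v vs IH] acc g0 //=.
under eq_eseriesr do rewrite IH // muleCA.
by rewrite nneseriesZl // => k _; rewrite mule_ge0 ?lee_fin ?wakeE_ge0.
Qed.

Lemma mean_ge0 : 0 <= mean eta.
Proof. by apply: nneseries_ge0 => k _ _; rewrite lee_fin mulr_ge0. Qed.

Lemma stepE_ge0 (g : state -> \bar R) s :
  (forall s', 0 <= g s') -> 0 <= stepE d eta g s.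
Proof. by move=> g0; apply: moveE_ge0 => qs; apply: wakeE_ge0. Qed.

Lemma stepEZ (g : state -> \bar R) (c : R) s : (0 <= c)%R ->
  (forall s', 0 <= g s') ->
  stepE d eta (fun s' => c%:E * g s') s = c%:E * stepE d eta g s.
Proof.
move=> c0 g0; rewrite /stepE -moveEZ // => [|qs]; last exact: wakeE_ge0.
by congr moveE; apply/funext => qs; apply: wakeEZ.
Qed.

Definition closed_state (s : state) : Prop :=
  {subset s.1 <= s.2} /\ (forall x v, x :: v \in s.2 -> v \in s.2).

Lemma closed_init_state : closed_state init_state.
Proof. by split => [f|x v] /=; rewrite inE // => /eqP. Qed.

Lemma closed_state_step s qs ws :
  closed_state s ->
  (forall q, q \in qs -> exists2 p, p \in s.1 & q \in nbrs d p) ->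
  let newv := undup [seq q <- qs | q \notin s.2] in
  {subset ws <= newv} -> closed_state (qs ++ ws, s.2 ++ newv).
Proof.
move=> [awake_vis par_vis] qs_nbrs newv ws_new; split => [f|x v] /=.
  rewrite !mem_cat => /orP[fqs|/ws_new ->]; last by rewrite orbT.
  by case fs: (f \in s.2); rewrite //= mem_undup mem_filter fs fqs.
rewrite !mem_cat => /orP[/par_vis -> //|].
rewrite mem_undup mem_filter => /andP[_ /qs_nbrs[[|y w] /awake_vis pvis]] /=.
  by move=> /mapP[i _ [_ ->]]; rewrite pvis.
rewrite inE => /orP[/eqP w_eq|/mapP[i _ [_ ->]]]; last by rewrite pvis.
by rewrite -w_eq in pvis; rewrite (par_vis _ _ (par_vis _ _ pvis)).
Qed.

Lemma le_stepE (g g' : state -> \bar R) s :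
  (forall s', 0 <= g s') -> closed_state s ->
  (forall s', closed_state s' -> g s' <= g' s') ->
  stepE d eta g s <= stepE d eta g' s.
Proof.
move=> g0 s_closed le_g; apply: le_moveE => qs qs_nbrs.
apply: le_wakeE => [ws|ws ws_new]; first exact: g0.
by apply: le_g; apply: closed_state_step.
Qed.

Lemma reachable_closed n s : reachable n d eta s -> closed_state s.
Proof.
elim: n s => [s ->|n IH s [s0 [/IH s0_closed]]]; first exact: closed_init_state.
apply: contraPP => s_open; apply/negP; rewrite -leNgt.
apply: (@le_trans _ _ (stepE d eta (fun=> 0%:E * 0) s0)); last first.
  by rewrite stepEZ // mul0e.
apply: le_stepE => // [s'|s' s'_closed]; first by case: ifP.
by rewrite mul0e; case: eqP => // eq_s'; rewrite eq_s' in s'_closed.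
Qed.

End Kernel.

Section Weight.
Variables (R : realType) (d : nat) (eta : nat -> R).
Hypotheses (d_gt0 : (0 < d)%N) (eta_pmf : is_pmf eta).
Local Open Scope ereal_scope.
Hypothesis mean_fin : mean eta < +oo.
Local Notation Emean := (fine (mean eta)).

Definition nbrs_mean (h : vertex -> R) (p : vertex) : R :=
  ((size (nbrs d p))%:R^-1 * \sum_(q <- nbrs d p) h q)%R.

Lemma moveE_sum ps (h : vertex -> R) (c : R) (g : seq vertex -> \bar R) :
  (forall qs, g qs = (c + \sum_(q <- qs) h q)%:E) ->
  moveE d ps g = (c + \sum_(p <- ps) nbrs_mean h p)%:E.
Proof.
elim: ps c g => [|p ps IH] c g gE /=; first by rewrite gE !big_nil.
have size_neq0 : ((size (nbrs d p))%:R != 0 :> R)%R.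
  by rewrite pnatr_eq0 size_nbrs; case: (p) => [|? ?] //; rewrite -lt0n.
under eq_bigr => q _.
  rewrite (IH (c + h q)%R) => [|qs]; last by rewrite gE big_cons addrA.
  over.
set S := (\sum_(p' <- ps) nbrs_mean h p')%R.
rewrite sumEFin -EFinM big_cons -/S /nbrs_mean; congr EFin.
rewrite (eq_bigr (fun q => c + S + h q)%R) => [|q _]; last by rewrite addrAC.
rewrite big_split /= big_const_seq count_predT iter_addr_0.
by rewrite -[((c + S) *+ _)%R]mulr_natr; field.
Qed.

Lemma wakeE_sum vs acc (w : vertex -> R) (c : R) :
  (forall x, 0 <= w x)%R -> (0 <= c)%R ->
  wakeE eta vs acc (fun ws => (c + \sum_(f <- ws) w f)%:E) =
  (c + \sum_(f <- acc) w f + Emean * \sum_(v <- vs) w v)%:E.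
Proof.
move=> w0 c0; have [eta_ge0 eta_sum1] := eta_pmf.
have mean_fine : mean eta = Emean%:E.
  by rewrite fineK // ge0_fin_numE // mean_ge0.
elim: vs acc => [|v vs IH] acc /=; first by rewrite big_nil mulr0 addr0.
set C := (c + \sum_(f <- acc) w f + Emean * \sum_(v' <- vs) w v')%R.
have C0 : (0 <= C)%R.
  by rewrite !addr_ge0 ?mulr_ge0 ?sumr_ge0 ?fine_ge0 ?mean_ge0.
under eq_eseriesr => k _.
  rewrite IH big_cat big_nseq iter_addr_0 -EFinM.
  rewrite (_ : (eta k * _)%R = C * eta k + w v * (k%:R * eta k))%R; last first.
    by rewrite /C /= -[(w v *+ k)%R]mulr_natr; ring.
  rewrite EFinD !EFinM.
  over.
rewrite nneseriesD => [|k _ _|k _ _]; last 2 first.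
- by rewrite mule_ge0 ?lee_fin.
- by rewrite mule_ge0 ?lee_fin ?mulr_ge0.
rewrite !nneseriesZl => [|k _|k _]; last 2 first.
- by rewrite lee_fin mulr_ge0.
- by rewrite lee_fin.
rewrite eta_sum1 mule1 -/(mean eta) mean_fine -EFinM -EFinD big_cons /C.
by congr EFin; ring.
Qed.

Lemma nbrs_mean_root_le (E r : R) (h : vertex -> R) :
  (0 < r)%R -> (r ^+ 2 = (E + 1) * d%:R)%R ->
  (forall i, h [:: i] <= (E + 1) * r^-1)%R ->
  (nbrs_mean h [::] <= 2 * r / (d%:R + 1))%R.
Proof.
move=> r_gt0 r_sq h_le; have d_pos : (0 < d%:R :> R)%R by rewrite ltr0n.
rewrite /nbrs_mean size_nbrs /= big_map.
apply: (@le_trans _ _ (d%:R^-1 * \sum_(i <- iota 0 d) ((E + 1) * r^-1))%R).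
  by rewrite ler_wpM2l ?invr_ge0 //; apply: ler_sum => i _; apply: h_le.
rewrite big_const_seq count_predT size_iota iter_addr_0.
rewrite -[((E + 1) / r *+ d)%R]mulr_natr.
rewrite (_ : E + 1 = r ^+ 2 / d%:R)%R; last first.
  by rewrite r_sq mulfK // gt_eqF.
rewrite [leLHS](_ : _ = r / d%:R)%R; last by field; rewrite !gt_eqF.
rewrite ler_pdivrMr // mulrAC ler_pdivlMr ?addr_gt0 //.
have : (1 <= d%:R :> R)%R by rewrite ler1n.
nra.
Qed.

Lemma nbrs_mean_child_le (E r : R) (h : vertex -> R) x v :
  (0 < r)%R -> (r ^+ 2 = (E + 1) * d%:R)%R ->
  (forall i, h (i :: x :: v) <= (E + 1) * r^-1 ^+ (size v).+2)%R ->
  h v = (r^-1 ^+ size v)%R ->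
  (nbrs_mean h (x :: v) <= 2 * r / (d%:R + 1) * r^-1 ^+ (size v).+1)%R.
Proof.
move=> r_gt0 r_sq h_le hv; have d_pos : (0 < d%:R :> R)%R by rewrite ltr0n.
rewrite /nbrs_mean size_nbrs /= big_cons big_map hv.
apply: (@le_trans _ _ ((d.+1%:R)^-1 *
    (r^-1 ^+ size v + \sum_(i <- iota 0 d) ((E + 1) * r^-1 ^+ (size v).+2)))%R).
  by rewrite ler_wpM2l ?invr_ge0 // lerD2l; apply: ler_sum => i _; apply: h_le.
rewrite big_const_seq count_predT size_iota iter_addr_0 -mulr_natr.
have -> : (E + 1 = r ^+ 2 / d%:R)%R by rewrite r_sq mulfK ?gt_eqF.
rewrite le_eqVlt; apply/orP; left; apply/eqP.
by rewrite !exprS -natr1; field; rewrite ?gt_eqF ?addr_gt0.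
Qed.

Variable theta : R.
Hypothesis theta_sq : (expR theta ^+ 2 = (Emean + 1) * d%:R)%R.
Local Notation r := (expR theta).
Local Notation m := (2 * r / (d%:R + 1))%R.

Lemma stepE_Wfun_le s : closed_state s ->
  stepE d eta (fun s' => (Wfun theta s')%:E) s <= (m * Wfun theta s)%:E.
Proof.
move=> [awake_vis par_vis].
have E0 : (0 <= Emean)%R := fine_ge0 (@mean_ge0 _ _ eta_pmf.1).
have r_gt0 : (0 < r)%R by apply: expR_gt0.
pose w (f : vertex) := expR (- theta * (size f)%:R).
have wE f : w f = (r^-1 ^+ size f)%R by rewrite /w expRM_natr expRN.
have w0 f : (0 <= w f)%R by apply: expR_ge0.
(* A frog landing on q is charged its own weight plus the expected weight of
   the frogs it wakes there, which is zero unless q is unvisited. *)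
pose h q := (w q + if q \notin s.2 then Emean * w q else 0)%R.
have h_le q : (h q <= (Emean + 1) * w q)%R.
  rewrite /h mulrDl mul1r [X in (_ <= X)%R]addrC lerD2l.
  by case: ifP; rewrite ?mulr_ge0.
pose g' qs := (0 + \sum_(q <- qs) h q)%R%:E.
apply: (le_trans (@le_moveE _ _ _ _ g' _)) => [qs _ /=|].
  rewrite (_ : (fun ws => _) =
      fun ws => (\sum_(q <- qs) w q + \sum_(f <- ws) w f)%:E); last first.
    by apply/funext => ws; rewrite /Wfun big_cat.
  rewrite wakeE_sum ?sumr_ge0 // big_nil addr0 /g' add0r lee_fin big_split.
  rewrite lerD2l /=.
  rewrite -big_mkcond -mulr_sumr ler_wpM2l // -[X in (_ <= X)%R]big_filter.
  exact: sumr_undup_le.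
rewrite (@moveE_sum _ h 0%R) // lee_fin add0r /Wfun mulr_sumr.
rewrite big_seq [leRHS]big_seq; apply: ler_sum => -[|x v] p_awake.
all: rewrite -/(w _) wE.
  rewrite expr0 mulr1; apply: nbrs_mean_root_le theta_sq _ => // i.
  by rewrite (le_trans (h_le _)) ?wE.
apply: nbrs_mean_child_le theta_sq _ _ => // [i|].
  by rewrite (le_trans (h_le _)) ?wE.
by rewrite /h (par_vis x v (awake_vis _ p_awake)) addr0 wE.
Qed.

Lemma lawE_le n (g : state -> \bar R) (c : R) : (0 <= c)%R ->
  (forall s, 0 <= g s) ->
  (forall s, closed_state s -> g s <= (c * Wfun theta s)%:E) ->
  lawE n d eta g <= (c * m ^+ n)%:E.
Proof.
have [eta_ge0 _] := eta_pmf.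
have m_ge0 : (0 <= m)%R by rewrite divr_ge0 ?mulr_ge0 ?expR_ge0 ?addr_ge0.
elim: n g c => [|n IH] g c c0 g0 g_le /=.
  by have := g_le _ closed_init_state; rewrite /Wfun big_seq1 mulr0 expR0 expr0.
rewrite exprS mulrA; apply: IH => [|s|s s_closed]; first exact: mulr_ge0.
  exact: stepE_ge0.
apply: (@le_trans _ _ (stepE d eta (fun s' => c%:E * (Wfun theta s')%:E) s)).
  by apply: le_stepE => // s' /g_le; rewrite EFinM.
rewrite stepEZ // => [|s']; last by rewrite lee_fin Wfun_ge0.
by rewrite -mulrA EFinM lee_wpmul2l ?lee_fin // stepE_Wfun_le.
Qed.

End Weight.

Theorem mainTheorem4 (R : realType) (d : nat) (eta : nat -> R) :
  (2 <= d)%N -> is_pmf eta -> (mean eta < +oo)%E ->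
  let Eeta := fine (mean eta) in
  let theta := 2^-1 * ln ((Eeta + 1) * d%:R) in
  let m := 2 * Num.sqrt ((Eeta + 1) * d%:R) / (d%:R + 1) in
  (forall n s, reachable n d eta s ->
     (stepE d eta (fun s' => (Wfun theta s')%:E) s <= (m * Wfun theta s)%:E)%E)
  /\
  (forall n,
     (lawE n d eta (fun s => (Wfun theta s)%:E) < +oo)%E /\
     (forall s, reachable n d eta s ->
        (stepE d eta (fun s' => (Wfun theta s' / m ^+ n.+1)%:E) s
           <= (Wfun theta s / m ^+ n)%:E)%E)).
Proof.
move=> d2 eta_pmf mean_fin Eeta theta m; have [eta_ge0 _] := eta_pmf.
have d_gt0 : (0 < d)%N by apply: leq_trans d2.
have X_gt0 : 0 < (Eeta + 1) * d%:R.
  by rewrite mulr_gt0 ?ltr0n // ltr_pwDr ?fine_ge0 ?mean_ge0.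
have r_sqrt : expR theta = Num.sqrt ((Eeta + 1) * d%:R).
  by rewrite -powR12_sqrt ?ltW // /powR gt_eqF // mulrC.
have theta_sq : expR theta ^+ 2 = (Eeta + 1) * d%:R.
  by rewrite r_sqrt sqr_sqrtr ?ltW.
have m_gt0 : 0 < m by rewrite divr_gt0 ?mulr_gt0 ?addr_gt0 ?ltr0n ?sqrtr_gt0.
have step s : closed_state s ->
    (stepE d eta (fun s' => (Wfun theta s')%:E) s <= (m * Wfun theta s)%:E)%E.
  by rewrite /m -r_sqrt; apply: stepE_Wfun_le.
have W_ge0 s : (0 <= (Wfun theta s)%:E)%E by rewrite lee_fin Wfun_ge0.
split=> [n s /(@reachable_closed _ _ _ eta_ge0)|n]; first exact: step.
split.
  apply: le_lt_trans (ltry (1 * m ^+ n)); rewrite /m -r_sqrt.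
  by apply: lawE_le => // s _; rewrite mul1r.
move=> s /(@reachable_closed _ _ _ eta_ge0) s_closed.
under eq_fun do rewrite mulrC EFinM.
have m_inv_ge0 : 0 <= (m ^+ n.+1)^-1 by rewrite invr_ge0 exprn_ge0 // ltW.
rewrite stepEZ //; apply: le_trans (lee_wpmul2l _ (step s s_closed)) _.
  by rewrite lee_fin.
by rewrite -EFinM lee_fin exprS invfM mulrAC mulKf ?gt_eqF.
Qed.
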